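(* Let $q$ be an odd prime power and $\lambda,\mu$ positive integers with $\mu\le\lambda$. (a) If $q\equiv3\pmod4$ and $\lambda$ is odd, then both $\frac{(q^{\mu}+1)(q^{\lambda-\mu}+1)}{2(q^{\lambda}+1)}{\lambda\brack\mu}_{q^2}$ and $\frac{(q^{\mu}-1)(q^{\lambda-\mu}-1)}{2(q^{\lambda}+1)}{\lambda\brack\mu}_{q^2}$ are integers. (b) If either $q\equiv3\pmod4$ and $\lambda$ is even, or $q\equiv1\pmod4$, then both $\frac{(q^{\mu}+1)(q^{\lambda-\mu}-1)}{2(q^{\lambda}-1)}{\lambda\brack\mu}_{q^2}$ and $\frac{(q^{\mu}-1)(q^{\lambda-\mu}+1)}{2(q^{\lambda}-1)}{\lambda\brack\mu}_{q^2}$ are integers.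
   Context: Gaussian binomial coefficient: ${a\brack b}_Q=\prod_{i=0}^{b-1}\frac{Q^a-Q^i}{Q^b-Q^i}$ for integers $1\le b\le a$. *)

From HB Require Import structures.
From mathcomp Require Import all_boot all_order all_algebra.
Set Implicit Arguments. Unset Strict Implicit. Unset Printing Implicit Defensive.
Import Order.TTheory GRing.Theory Num.Theory.
Local Open Scope ring_scope.

Definition gauss_binom (Q : rat) (a b : nat) : rat :=
  \prod_(i < b) ((Q ^+ a - Q ^+ i) / (Q ^+ b - Q ^+ i)).

Definition is_integer (x : rat) : Prop := exists z : int, x = z%:~R.

Definition prime_power (q : nat) : Prop :=
  exists p k : nat, [/\ prime p, (0 < k)%N & q = (p ^ k)%N].

(* Put [c = q^mu], [d = q^(lam-mu)] and let [G1], [G0] be the Gaussian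
   binomials [lam-1 brack mu-1] and [lam-1 brack mu] in base [q^2]; they are
   integers.  The two q-Pascal rules give [G = G1 + c^2 G0 = d^2 G1 + G0], and
   a suitable combination of them yields, for signs [s], [t],
     (c + s)(d + t) G = (c d + s t) (t (d + t) G1 + c (c + s) G0).
   As [c] and [d] are odd, [(c + s)/2] and [(d + t)/2] are integers, so every
   one of the four quotients is an integer. *)

From HB Require Import structures.
From mathcomp Require Import all_boot all_order all_algebra.
From mathcomp Require Import ring lra.
Set Implicit Arguments.
Unset Strict Implicit.
Unset Printing Implicit Defensive.

Import Order.TTheory GRing.Theory Num.Theory.
Local Open Scope ring_scope.

Definition qfalling (Q : rat) (a b : nat) : rat := \prod_(i < b) (Q ^+ a - Q ^+ i).

Lemma gauss_binom0 (Q : rat) (a : nat) : gauss_binom Q a 0 = 1.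
Proof. by rewrite /gauss_binom big_ord0. Qed.

Lemma gauss_binom0S (Q : rat) (b : nat) : gauss_binom Q 0 b.+1 = 0.
Proof. by rewrite /gauss_binom big_ord_recl subrr !mul0r. Qed.

Section GaussBinom.

Variable Q : rat.
Hypotheses (Q_gt0 : 0 < Q) (Q_neq1 : Q != 1).

Lemma subrXX_neq0 (a b : nat) : a != b -> Q ^+ a - Q ^+ b != 0.
Proof. by rewrite subr_eq0; apply: contra => /eqP/(ieexprIn Q_gt0 Q_neq1)->. Qed.

Lemma subrX1_neq0 (b : nat) : Q ^+ b.+1 - 1 != 0.
Proof. by rewrite -(expr0 Q) subrXX_neq0. Qed.

Lemma exprQ_neq0 (a : nat) : Q ^+ a != 0.
Proof. by rewrite expf_neq0 // gt_eqF. Qed.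

Lemma gauss_binomE (a b : nat) : gauss_binom Q a b = qfalling Q a b / qfalling Q b b.
Proof. by rewrite /gauss_binom prodf_div. Qed.

Lemma qfalling_diag_neq0 (b : nat) : qfalling Q b b != 0.
Proof. by apply/prodf_neq0 => i _; rewrite subrXX_neq0 // gtn_eqF. Qed.

Lemma qfallingSS (a b : nat) : qfalling Q a.+1 b.+1 = (Q ^+ a.+1 - 1) * Q ^+ b * qfalling Q a b.
Proof.
have -> : Q ^+ b = \prod_(i < b) Q by rewrite prodr_const card_ord.
rewrite /qfalling big_ord_recl expr0 -mulrA -big_split /=; congr (_ * _).
apply: eq_bigr => i _.
by rewrite /bump /= add1n !exprS mulrBr.
Qed.

Lemma qfallingS (a b : nat) : qfalling Q a b.+1 = qfalling Q a b * (Q ^+ a - Q ^+ b).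
Proof. by rewrite /qfalling big_ord_recr. Qed.

Lemma gauss_binomS (a b : nat) :
  gauss_binom Q a.+1 b.+1 = gauss_binom Q a b + Q ^+ b.+1 * gauss_binom Q a b.+1.
Proof.
have := subrX1_neq0 b; have := exprQ_neq0 b; have := qfalling_diag_neq0 b.
rewrite !gauss_binomE !qfallingSS qfallingS !exprS => *; field.
by apply/and3P.
Qed.

Lemma gauss_binomS_dual (a b : nat) : (b <= a)%N ->
  gauss_binom Q a.+1 b.+1 = Q ^+ (a - b) * gauss_binom Q a b + gauss_binom Q a b.+1.
Proof.
move=> le_ba; have Qa : Q ^+ a = Q ^+ (a - b) * Q ^+ b by rewrite -exprD subnK.
have := subrX1_neq0 b; have := exprQ_neq0 b; have := qfalling_diag_neq0 b.
rewrite !gauss_binomE !qfallingSS qfallingS !exprS Qa => *; field.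
by apply/and3P.
Qed.

Lemma gauss_binom_int (a b : nat) : Q \is a Num.int -> gauss_binom Q a b \is a Num.int.
Proof.
move=> Qint; elim: a b => [|a IHa] [|b].
- by rewrite gauss_binom0.
- by rewrite gauss_binom0S.
- by rewrite gauss_binom0.
- by rewrite gauss_binomS rpredD ?rpredM ?rpredX.
Qed.

End GaussBinom.

Lemma pascal_pair_sign_identity (R : comPzRingType) (c d s t G G1 G0 : R) :
  s ^+ 2 = 1 -> t ^+ 2 = 1 -> G = G1 + c ^+ 2 * G0 -> G = d ^+ 2 * G1 + G0 ->
  (c + s) * (d + t) * G = (c * d + s * t) * (t * (d + t) * G1 + c * (c + s) * G0).
Proof.
move=> s2 t2 G_G0 G_G1.
have -> : (c + s) * (d + t) * G = (c * d + s * d + s * t) * G + t * c * G by ring.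
rewrite {1}G_G0 {}G_G1; apply/eqP; rewrite -subr_eq0.
have -> : (c * d + s * d + s * t) * (G1 + c ^+ 2 * G0) + t * c * (d ^+ 2 * G1 + G0)
          - (c * d + s * t) * (t * (d + t) * G1 + c * (c + s) * G0)
        = (c * d + s * d + s * t) * G1 * (1 - t ^+ 2) + t * c * G0 * (1 - s ^+ 2) by ring.
by rewrite s2 t2 subrr !mulr0 addr0.
Qed.

Lemma sqr_eq1_int (s : rat) : s ^+ 2 = 1 -> s \is a Num.int.
Proof. by move/eqP; rewrite sqrf_eq1 => /orP[]/eqP->; rewrite ?rpredN. Qed.

Lemma odd_half_int (n : nat) (s : rat) : odd n -> s ^+ 2 = 1 -> (n%:R + s) / 2 \is a Num.int.
Proof.
move=> odd_n /eqP; rewrite sqrf_eq1 -(odd_double_half n) odd_n -muln2 natrD natrM /=.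
case/orP=> /eqP->.
- have -> : (1 + n./2%:R * 2%:R + 1) / 2 = n./2%:R + 1 :> rat by field.
  by rewrite rpredD ?natr_int.
- have -> : (1 + n./2%:R * 2%:R - 1) / 2 = n./2%:R :> rat by field.
  by rewrite natr_int.
Qed.

Lemma pascal_quotient_int (c d s t G G1 G0 : rat) :
  s ^+ 2 = 1 -> t ^+ 2 = 1 -> 1 < c * d -> c \is a Num.int ->
  (c + s) / 2 \is a Num.int -> (d + t) / 2 \is a Num.int ->
  G1 \is a Num.int -> G0 \is a Num.int ->
  G = G1 + c ^+ 2 * G0 -> G = d ^+ 2 * G1 + G0 ->
  (c + s) * (d + t) / (2 * (c * d + s * t)) * G \is a Num.int.
Proof.
move=> s2 t2 cd_gt1 c_int cs_int dt_int G1_int G0_int G_G0 G_G1.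
have /eqP : (s * t) ^+ 2 = 1 by rewrite exprMn s2 t2 mulr1.
rewrite sqrf_eq1 => st_pm1.
have D_neq0 : c * d + s * t != 0.
  by case/orP: st_pm1 => /eqP->; rewrite gt_eqF //; lra.
rewrite mulrAC (pascal_pair_sign_identity s2 t2 G_G0 G_G1).
have -> : (c * d + s * t) * (t * (d + t) * G1 + c * (c + s) * G0) / (2 * (c * d + s * t))
        = t * ((d + t) / 2) * G1 + c * ((c + s) / 2) * G0 by field.
by apply: rpredD; rewrite rpredM // rpredM // sqr_eq1_int.
Qed.

Lemma prime_power_gt1 (q : nat) : prime_power q -> (1 < q)%N.
Proof. by case=> p [k [p_pr k_gt0 ->]]; rewrite -(exp1n k) ltn_exp2r -?lt0n ?prime_gt1. Qed.

Theorem corollary3p1 (q lam mu : nat)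
  (hq : prime_power q) (hodd : odd q)
  (hmu : (0 < mu)%N) (hmul : (mu <= lam)%N) :
  let Q : rat := q%:R in
  let G := gauss_binom (Q ^+ 2) lam mu in
  (((q %% 4 = 3)%N /\ odd lam) ->
     is_integer ((Q ^+ mu + 1) * (Q ^+ (lam - mu) + 1) / (2 * (Q ^+ lam + 1)) * G) /\
     is_integer ((Q ^+ mu - 1) * (Q ^+ (lam - mu) - 1) / (2 * (Q ^+ lam + 1)) * G)) /\
  ((((q %% 4 = 3)%N /\ ~~ odd lam) \/ (q %% 4 = 1)%N) ->
     is_integer ((Q ^+ mu + 1) * (Q ^+ (lam - mu) - 1) / (2 * (Q ^+ lam - 1)) * G) /\
     is_integer ((Q ^+ mu - 1) * (Q ^+ (lam - mu) + 1) / (2 * (Q ^+ lam - 1)) * G)).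
Proof.
move=> Q G; have Q_gt1 : 1 < Q by rewrite ltr1n prime_power_gt1.
have Q2_gt0 : 0 < Q ^+ 2 by rewrite exprn_gt0 // (lt_trans ltr01).
have Q2_neq1 : Q ^+ 2 != 1 by rewrite gt_eqF // exprn_egt1.
have Q2_int : Q ^+ 2 \is a Num.int by rewrite rpredX ?natr_int.
have QX_half n s : s ^+ 2 = 1 -> (Q ^+ n + s) / 2 \is a Num.int.
  by rewrite -natrX; apply: odd_half_int; rewrite oddX hodd orbT.
rewrite {}/G; case: mu hmu hmul => [|m] // _; case: lam => [|l] // le_ml; rewrite ltnS in le_ml.
rewrite subSS; set c := Q ^+ m.+1; set d := Q ^+ (l - m).
have -> : Q ^+ l.+1 = c * d by rewrite -exprD addSn subnKC.
have key s t : s ^+ 2 = 1 -> t ^+ 2 = 1 ->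
    is_integer ((c + s) * (d + t) / (2 * (c * d + s * t)) * gauss_binom (Q ^+ 2) l.+1 m.+1).
  move=> s2 t2; apply/intrP.
  apply: (pascal_quotient_int (G1 := gauss_binom (Q ^+ 2) l m)
                              (G0 := gauss_binom (Q ^+ 2) l m.+1));
    rewrite ?QX_half ?gauss_binom_int //.
  - by rewrite -exprD addSn subnKC // exprn_egt1.
  - by rewrite rpredX ?natr_int.
  - by rewrite gauss_binomS // exprAC.
  - by rewrite gauss_binomS_dual // exprAC.
split=> _; split.
- by have := key 1 1; rewrite mulr1; apply; rewrite expr1n.
- by have := key (-1) (-1); rewrite mulrNN mulr1; apply; rewrite sqrrN expr1n.
- by have := key 1 (-1); rewrite mul1r; apply; rewrite ?sqrrN expr1n.
- by have := key (-1) 1; rewrite mulr1; apply; rewrite ?sqrrN expr1n.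
Qed.
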